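(* Let $S$ be a numerical semigroup of multiplicity $m$. Then the set of binomials $$\{\,x_ix_j-y^{c_{i,j}}x_{i+j} : 1\le i\le j\le m-1\,\}$$ generates the Apéry toric ideal $J_S$ and is a Gröbner basis of $J_S$ with respect to any term order $\preceq$ on $R$ such that $\mathbf x^{\mathbf a}y^r\succ \mathbf x^{\mathbf b}y^s$ whenever $a_1+\cdots+a_{m-1}>b_1+\cdots+b_{m-1}$ (where $\mathbf x^{\mathbf a},\mathbf x^{\mathbf b}$ are monomials in $x_1,\dots,x_{m-1}$). Moreover, the initial ideal of $J_S$ under such an order is $\langle x_ix_j: 1\le i,j\le m-1\rangle$.
   Context: A numerical semigroup is a submonoid $S\subseteq(\mathbb Z_{\ge0},+)$ containing $0$ with finite complement; its multiplicity is $m=\min(S\setminus\{0\})\ge2$. The Apéry set is $\{n\in S: n-m\notin S\}=\{0,a_1,\dots,a_{m-1}\}$ with $a_i\equiv i\pmod m$; set $a_0=m$. Subscripts are read modulo $m$ with representatives in $\{0,\dots,m-1\}$. Let $R=\Bbbk[x_0,x_1,\dots,x_{m-1}]$ over a field $\Bbbk$, graded by $\deg x_i=a_i$, and write $y=x_0$ (so $x_{i+j}=y$ when $i+j\equiv0$). The Apéry toric ideal is $J_S=\ker(\varphi)$ where $\varphi:R\to\Bbbk[t]$, $x_i\mapsto t^{a_i}$. For $1\le i,j\le m-1$, $c_{i,j}=\frac1m(a_i+a_j-a_{i+j})\ge0$. *)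

From HB Require Import structures.
From mathcomp Require Import all_boot all_order all_algebra.
From mathcomp Require Import mpoly.
Set Implicit Arguments. Unset Strict Implicit. Unset Printing Implicit Defensive.
Import Order.TTheory GRing.Theory.
Local Open Scope ring_scope.

Definition numerical_semigroup (S : pred nat) : Prop :=
  [/\ S 0%N,
      (forall x y, S x -> S y -> S (x + y)%N)
    & exists N : nat, forall n, (N <= n)%N -> S n].

Definition multiplicity (S : pred nat) (m : nat) : Prop :=
  [/\ (0 < m)%N, S m & forall k, (0 < k < m)%N -> ~~ S k].

(* a : 'I_m -> nat lists the Apery set: a_0 = m and, for 1 <= i <= m-1,
   a_i is the element of Ap(S,m) = {n in S : n - m notin S} with
   a_i = i (mod m).  ("n - m notin S" is automatic when n < m.) *)
Definition apery_data (S : pred nat) (m : nat) (a : 'I_m -> nat) : Prop :=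
  forall i : 'I_m,
    if i == 0 :> nat then a i = m
    else [/\ S (a i), (a i %% m)%N = i & (m <= a i)%N -> ~~ S (a i - m)%N].

Lemma ord_pos m (i : 'I_m) : (0 < m)%N.
Proof. exact: leq_ltn_trans (leq0n i) (ltn_ord i). Qed.

Definition ordmod m (i : 'I_m) (k : nat) : 'I_m :=
  Ordinal (ltn_pmod k (ord_pos i)).

Definition oadd m (i j : 'I_m) : 'I_m := ordmod i (i + j).

Definition cij m (a : 'I_m -> nat) (i j : 'I_m) : nat :=
  ((a i + a j - a (oadd i j)) %/ m)%N.

(* J_S = ker (x_i |-> t^{a_i}), where a_0 = m. *)
Definition apery_toric_ideal (K : fieldType) m (a : 'I_m -> nat)
  (p : {mpoly K[m]}) : Prop :=
  mmap (@polyC K) (fun i : 'I_m => ('X ^+ a i : {poly K})) p = 0.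

Definition in_ideal (K : fieldType) m (G : {mpoly K[m]} -> Prop)
  (p : {mpoly K[m]}) : Prop :=
  exists (n : nat) (r g : 'I_n -> {mpoly K[m]}),
    (forall k, G (g k)) /\ p = \sum_(k < n) r k * g k.

Definition term_order m (le : rel 'X_{1..m}) : Prop :=
  [/\ reflexive le, antisymmetric le, transitive le & total le] /\
  (forall u v w, le u v -> le (u + w)%MM (v + w)%MM) /\
  (forall u, le 0%MM u).

Definition is_lead_monom (K : fieldType) m (le : rel 'X_{1..m})
  (p : {mpoly K[m]}) (u : 'X_{1..m}) : Prop :=
  u \in msupp p /\ forall v, v \in msupp p -> le v u.

Definition lead_monoms (K : fieldType) m (le : rel 'X_{1..m})
  (F : {mpoly K[m]} -> Prop) (q : {mpoly K[m]}) : Prop :=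
  exists f u, [/\ F f, f != 0, is_lead_monom le f u & q = 'X_[u]].

Definition initial_ideal (K : fieldType) m (le : rel 'X_{1..m})
  (J : {mpoly K[m]} -> Prop) : {mpoly K[m]} -> Prop :=
  in_ideal (lead_monoms le J).

Definition groebner_basis (K : fieldType) m (le : rel 'X_{1..m})
  (G J : {mpoly K[m]} -> Prop) : Prop :=
  (forall g, G g -> J g) /\
  (forall p, initial_ideal le J p <-> in_ideal (lead_monoms le G) p).

Definition same_ideal (K : fieldType) m (I1 I2 : {mpoly K[m]} -> Prop) : Prop :=
  forall p, I1 p <-> I2 p.

(* sum of the exponents of x_1, ..., x_{m-1} (excluding y = x_0) *)
Definition xdeg m (u : 'X_{1..m}) : nat := (\sum_(i < m | i != 0 :> nat) u i)%N.

Definition apery_binomials (K : fieldType) m (a : 'I_m -> nat)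
  (q : {mpoly K[m]}) : Prop :=
  exists i j : 'I_m, [/\ (0 < i)%N, (i <= j)%N &
    q = 'X_i * 'X_j - 'X_(ordmod i 0) ^+ cij a i j * 'X_(oadd i j)].

Definition quad_monoms (K : fieldType) m (q : {mpoly K[m]}) : Prop :=
  exists i j : 'I_m, [/\ (0 < i)%N, (0 < j)%N & q = 'X_i * 'X_j].

From mathcomp Require Import all_boot all_order all_algebra.
From mathcomp Require Import mpoly zify ring.
Import Order.TTheory GRing.Theory.
Local Open Scope ring_scope.
Set Implicit Arguments. Unset Strict Implicit.

(* Since a_i + a_j and a_{i+j} are both in S and congruent mod m, minimality of
   the Apery element gives a_i + a_j = c_{i,j} m + a_{i+j}, so the binomials lie
   in J_S.  Modulo the binomials every monomial reduces to a standard monomial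
   y^r or y^r x_k, and these are mapped to the distinct powers t^{rm} and
   t^{rm + a_k} because a_k = k (mod m).  Hence a polynomial in J_S supported on
   standard monomials vanishes: J_S is generated by the binomials, and the
   leading monomial of every nonzero element of J_S has x-degree at least two,
   i.e. is divisible by some x_i x_j, the leading monomial of a binomial. *)

Section IdealGeneration.

Variables (K : fieldType) (m : nat).
Implicit Types (G H : {mpoly K[m]} -> Prop) (p q r : {mpoly K[m]}).

Lemma in_ideal0 G : in_ideal G 0.
Proof. by exists 0%N, (fun=> 0), (fun=> 0); split; [case | rewrite big_ord0]. Qed.

Lemma in_ideal_gen G p : G p -> in_ideal G p.
Proof. by move=> Gp; exists 1%N, (fun=> 1), (fun=> p); rewrite big_ord1 mul1r. Qed.

Lemma in_idealD G p q : in_ideal G p -> in_ideal G q -> in_ideal G (p + q).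
Proof.
case=> [n1 [r1 [g1 [G1 ->]]]] [n2 [r2 [g2 [G2 ->]]]].
exists (n1 + n2)%N, (fun k => match split k with inl i => r1 i | inr j => r2 j end),
  (fun k => match split k with inl i => g1 i | inr j => g2 j end); split.
  by move=> k; case: (split k).
rewrite big_split_ord /=; congr (_ + _); apply: eq_bigr => i _.
  by rewrite (unsplitK (inl _ i)).
by rewrite (unsplitK (inr _ i)).
Qed.

Lemma in_idealMl G r p : in_ideal G p -> in_ideal G (r * p).
Proof.
case=> [n [r1 [g1 [G1 ->]]]]; exists n, (fun k => r * r1 k), g1; split=> //.
by rewrite mulr_sumr; apply: eq_bigr => i _; rewrite mulrA.
Qed.

Lemma in_ideal_sub G H p :
  (forall g, G g -> in_ideal H g) -> in_ideal G p -> in_ideal H p.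
Proof.
move=> GH [n [r [g [Gg ->]]]]; elim/big_ind: _ => [|x y|i _].
- exact: in_ideal0.
- exact: in_idealD.
- exact/in_idealMl/GH.
Qed.

Lemma in_ideal_mono G H p : (forall g, G g -> H g) -> in_ideal G p -> in_ideal H p.
Proof. by move=> GH; apply: in_ideal_sub => g /GH /in_ideal_gen. Qed.

Lemma in_ideal_ker (R : nzRingType) (f : {rmorphism {mpoly K[m]} -> R}) G p :
  (forall g, G g -> f g = 0) -> in_ideal G p -> f p = 0.
Proof.
move=> Gf [n [r [g [Gg ->]]]]; rewrite rmorph_sum big1 // => k _.
by rewrite rmorphM (Gf _ (Gg k)) mulr0.
Qed.

End IdealGeneration.

Section Monomials.

Variable m : nat.
Implicit Types (u v w : 'X_{1..m}) (a : 'I_m -> nat).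

Definition aweight a u : nat := (\sum_i a i * u i)%N.

Lemma mmap1_aweight (K : fieldType) a u :
  mmap1 (fun i : 'I_m => ('X ^+ a i : {poly K})) u = 'X^(aweight a u).
Proof.
rewrite /mmap1 /aweight; elim/big_rec2: _ => [|i y1 y2 _ ->]; first by rewrite expr0.
by rewrite -exprM exprD.
Qed.

Lemma aweightD a u v : aweight a (u + v)%MM = (aweight a u + aweight a v)%N.
Proof. by rewrite /aweight -big_split; apply: eq_bigr => i _; rewrite mnmDE mulnDr. Qed.

Lemma aweightU a k : aweight a U_(k)%MM = a k.
Proof.
rewrite /aweight (bigD1 k) //= mnm1E eqxx muln1 big1 ?addn0 // => i ik.
by rewrite mnm1E eq_sym (negbTE ik) muln0.
Qed.

Lemma aweightMn a u r : aweight a (u *+ r)%MM = (aweight a u * r)%N.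
Proof. by rewrite /aweight big_distrl; apply: eq_bigr => i _; rewrite mulmnE mulnA. Qed.

Lemma xdeg0 : xdeg (0 : 'X_{1..m})%MM = 0%N.
Proof. by rewrite /xdeg big1 // => i _; rewrite mnm0E. Qed.

Lemma xdegD u v : xdeg (u + v)%MM = (xdeg u + xdeg v)%N.
Proof. by rewrite /xdeg -big_split; apply: eq_bigr => i _; rewrite mnmDE. Qed.

Lemma xdegU (k : 'I_m) : xdeg U_(k)%MM = (k != 0 :> nat).
Proof.
rewrite /xdeg; case: eqP => [k0|/eqP k0].
  by apply: big1 => i i0; rewrite mnm1E; case: eqP => // ki; rewrite -ki k0 in i0.
rewrite (bigD1 k) //= mnm1E eqxx big1 ?addn0 // => i /andP[_ ik].
by rewrite mnm1E eq_sym (negbTE ik).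
Qed.

Lemma xdegUMn (y : 'I_m) r : val y = 0%N -> xdeg (U_(y) *+ r)%MM = 0%N.
Proof.
move=> y0; rewrite /xdeg big1 // => i i0; rewrite mulmnE mnm1E.
by case: eqP => // yi; rewrite -yi y0 in i0.
Qed.

Lemma mnm_le_xdeg u (i : 'I_m) : val i != 0%N -> (u i <= xdeg u)%N.
Proof. by move=> i0; rewrite /xdeg (bigD1 i) //= leq_addr. Qed.

Lemma mnm_le_xdeg2 u (i k : 'I_m) : val i != 0%N -> val k != 0%N -> i != k ->
  (u i + u k <= xdeg u)%N.
Proof.
move=> i0 k0 ik; rewrite /xdeg (bigD1 i) //= (bigD1 k) /=; last by rewrite k0 eq_sym.
by rewrite addnA leq_addr.
Qed.

Lemma xdeg_gt0P u : (0 < xdeg u)%N -> exists2 k : 'I_m, val k != 0%N & (0 < u k)%N.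
Proof.
move=> u_gt0; case: (boolP [exists k : 'I_m, (val k != 0%N) && (0 < u k)%N]).
  by case/existsP => k /andP[k0 uk]; exists k.
move/existsPn => h0; move: u_gt0; rewrite /xdeg big1 // => k k0.
by have := h0 k; rewrite k0 /= lt0n negbK => /eqP.
Qed.

Lemma mnm_subUK u (k : 'I_m) : (0 < u k)%N -> u = ((u - U_(k)) + U_(k))%MM.
Proof.
move=> uk; rewrite submK //; apply/mnm_lepP => i; rewrite mnm1E.
by case: eqP => [<-|].
Qed.

Lemma xdeg_le1P (y : 'I_m) w : val y = 0%N -> (xdeg w <= 1)%N ->
  w = (U_(y) *+ w y)%MM \/ exists2 k : 'I_m, val k != 0%N & w = (U_(y) *+ w y + U_(k))%MM.
Proof.
move=> y0 w1; have iy i : val i = 0%N -> i = y by move=> i0; apply: val_inj; rewrite /= i0 y0.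
case: (boolP [exists k : 'I_m, (val k != 0%N) && (0 < w k)%N]).
  case/existsP => k /andP[k0 wk]; right; exists k => //.
  have wk1 : w k = 1%N by have := mnm_le_xdeg w k0; lia.
  apply/mnmP => i; rewrite mnmDE mulmnE !mnm1E.
  have [i0|i0] := eqVneq (val i) 0%N.
    rewrite (iy _ i0) eqxx mul1n; case: eqP => [ky|_]; last by rewrite addn0.
    by move: k0; rewrite ky y0.
  case: eqP => [yi|_]; first by move: i0; rewrite -yi y0.
  rewrite mul0n add0n; case: (eqVneq k i) => [<-|ki]; first by rewrite wk1.
  have := mnm_le_xdeg2 w i0 k0; rewrite eq_sym ki => /(_ isT); lia.
move/existsPn => h0; left; apply/mnmP => i; rewrite mulmnE mnm1E.
have [i0|i0] := eqVneq (val i) 0%N; first by rewrite (iy _ i0) eqxx mul1n.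
case: eqP => [yi|_]; first by move: i0; rewrite -yi y0.
by rewrite mul0n; have := h0 i; rewrite i0 /= lt0n negbK => /eqP.
Qed.

End Monomials.

Lemma semigroup_mul (S : pred nat) n : numerical_semigroup S -> S n -> forall t, S (t * n)%N.
Proof.
case=> S0 SD _ Sn; elim=> [|t IHt]; first by rewrite mul0n.
by rewrite mulSn; apply: SD.
Qed.

Section Apery.

Variables (S : pred nat) (m : nat) (a : 'I_m -> nat).
Hypotheses (S_ns : numerical_semigroup S) (S_mult : multiplicity S m)
  (S_apery : apery_data S a).

Lemma apery_mod (k : 'I_m) : (a k %% m)%N = k.
Proof. by have := S_apery k; case: eqP => [k0 ->|_ [] //]; rewrite modnn k0. Qed.

Lemma apery0 (y : 'I_m) : val y = 0%N -> a y = m.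
Proof. by move=> y0; have := S_apery y; rewrite y0 eqxx. Qed.

Lemma apery_mem (k : 'I_m) : val k != 0%N -> S (a k) /\ (m <= a k)%N.
Proof.
move=> k0; have [_ _ mS] := S_mult; have := S_apery k; rewrite (negbTE k0).
case=> Sak akk _; split=> //; rewrite leqNgt; apply/negP => ak_lt.
have ak_gt0 : (0 < a k)%N.
  by rewrite lt0n; apply/eqP => ak0; move: k0; rewrite /= -akk ak0 mod0n.
by move: (mS (a k)); rewrite ak_gt0 ak_lt Sak => /(_ isT).
Qed.

Lemma apery_min (k : 'I_m) s : S s -> (0 < s)%N -> (s %% m = k)%N -> (a k <= s)%N.
Proof.
move=> Ss s_gt0 sk; have [m_gt0 Sm _] := S_mult; have [_ SD _] := S_ns.
have := S_apery k; case: eqP => [k0 ->|_ [_ akk notS]].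
  by apply: dvdn_leq => //; rewrite /dvdn sk k0.
rewrite leqNgt; apply/negP => s_lt.
have /dvdnP[[|t] ht] : (m %| a k - s)%N by rewrite -eqn_mod_dvd ?(ltnW s_lt) // akk sk.
  by move: ht; rewrite mul0n; lia.
move: ht; rewrite mulSn => ht; have m_le : (m <= a k)%N by lia.
apply: (negP (notS m_le)); have -> : (a k - m = s + t * m)%N by lia.
by apply: SD => //; apply: semigroup_mul.
Qed.

Lemma apery_add (i j : 'I_m) : val i != 0%N -> val j != 0%N ->
  (a i + a j = cij a i j * m + a (oadd i j))%N.
Proof.
move=> i0 j0; have [_ SD _] := S_ns; have [m_gt0 _ _] := S_mult.
have [Si mi] := apery_mem i0; have [Sj mj] := apery_mem j0.
have sk : ((a i + a j) %% m = oadd i j)%N by rewrite -modnDm !apery_mod.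
have le_s : (a (oadd i j) <= a i + a j)%N by apply: apery_min; [exact: SD | lia | ].
have : (m %| a i + a j - a (oadd i j))%N by rewrite -eqn_mod_dvd // apery_mod sk.
by rewrite /cij => /divnK ->; rewrite subnK.
Qed.

Lemma binomial_toric (K : fieldType) (y i j : 'I_m) : val y = 0%N ->
  val i != 0%N -> val j != 0%N ->
  apery_toric_ideal a ('X_i * 'X_j - 'X_y ^+ cij a i j * 'X_(oadd i j) : {mpoly K[m]}).
Proof.
move=> y0 i0 j0; rewrite /apery_toric_ideal rmorphB !rmorphM rmorphXn /=.
by rewrite !mmapX !mmap1U (apery0 y0) -!exprM -!exprD apery_add // mulnC subrr.
Qed.

(* The weight of y^r x_k is r m + a_k, and a_k = k (mod m). *)
Lemma aweight_std_inj (y : 'I_m) (v w : 'X_{1..m}) : val y = 0%N ->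
  (xdeg v <= 1)%N -> (xdeg w <= 1)%N -> aweight a v = aweight a w -> v = w.
Proof.
move=> y0 v1 w1; have [m_gt0 _ _] := S_mult.
have yE r : aweight a (U_(y) *+ r)%MM = (m * r)%N by rewrite aweightMn aweightU apery0.
have mr r : ((m * r) %% m = 0)%N by rewrite mulnC modnMl.
have mrk r (k : 'I_m) : ((m * r + a k) %% m = k)%N.
  by rewrite -modnDm mr add0n modn_mod apery_mod.
case: (xdeg_le1P y0 v1) => [ev|[k k0 ev]]; case: (xdeg_le1P y0 w1) => [ew|[l l0 ew]];
  rewrite ev ew ?aweightD !yE ?aweightU.
- by move/(congr1 (divn^~ m)); rewrite !mulKn // => ->.
- by move/(congr1 (modn^~ m)); rewrite mr mrk => /esym/eqP; rewrite (negbTE l0).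
- by move/(congr1 (modn^~ m)); rewrite mr mrk => /eqP; rewrite (negbTE k0).
- move=> e; have kl : k = l by apply: val_inj; rewrite /= -(mrk (v y) k) e mrk.
  by move: e; rewrite kl => /addIn /(congr1 (divn^~ m)); rewrite !mulKn // => ->.
Qed.

Lemma toric_std_eq0 (K : fieldType) (y : 'I_m) (q : {mpoly K[m]}) : val y = 0%N ->
  (forall v, (1 < xdeg v)%N -> q@_v = 0) -> apery_toric_ideal a q -> q = 0.
Proof.
move=> y0 q_std qJ; apply/mpolyP => v; rewrite mcoeff0.
have [vq|/memN_msupp_eq0 //] := boolP (v \in msupp q).
have std u : u \in msupp q -> (xdeg u <= 1)%N.
  by move=> uq; rewrite leqNgt; apply/negP => /q_std; apply/eqP; rewrite -mcoeff_msupp.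
have := congr1 (fun p : {poly K} => p`_(aweight a v)) qJ; rewrite /= /mmap.
rewrite coef0 coef_sum (bigD1_seq v) ?msupp_uniq //= mmap1_aweight coefCM coefXn eqxx mulr1.
rewrite big1_seq ?addr0 // => u /andP[uv uq].
rewrite mmap1_aweight coefCM coefXn; case: eqP => [e|]; last by rewrite mulr0.
by move: uv; rewrite (aweight_std_inj y0 (std _ vq) (std _ uq) e) eqxx.
Qed.

End Apery.

Lemma in_ideal_toric (K : fieldType) m (a : 'I_m -> nat) (G : {mpoly K[m]} -> Prop) p :
  (forall g, G g -> apery_toric_ideal a g) -> in_ideal G p -> apery_toric_ideal a p.
Proof. exact: in_ideal_ker. Qed.

Section Reduction.

Variables (K : fieldType) (m : nat) (a : 'I_m -> nat) (y : 'I_m).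
Hypothesis y0 : val y = 0%N.

Local Notation B := (@apery_binomials K m a).

Lemma ordmod_0 (k : 'I_m) : ordmod k 0 = y.
Proof. by apply: val_inj; rewrite /= mod0n y0. Qed.

Lemma binomial_mem (i j : 'I_m) : val i != 0%N -> val j != 0%N ->
  in_ideal B ('X_i * 'X_j - 'X_y ^+ cij a i j * 'X_(oadd i j)).
Proof.
move=> i0 j0; case: (leqP i j) => ij.
  by apply: in_ideal_gen; exists i, j; rewrite lt0n ordmod_0.
have e : oadd i j = oadd j i by apply: val_inj; rewrite /= addnC.
have -> : cij a i j = cij a j i by rewrite /cij e addnC.
by rewrite e mulrC; apply: in_ideal_gen; exists j, i; rewrite lt0n ordmod_0 ltnW.
Qed.

Lemma std_mulX_reduce w (i : 'I_m) : (xdeg w <= 1)%N ->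
  exists2 w', (xdeg w' <= 1)%N & in_ideal B ('X_[w + U_(i)] - 'X_[w']).
Proof.
move=> w1; have [i0|i0] := eqVneq (val i) 0%N.
  exists (w + U_(i))%MM; last by rewrite subrr; apply: in_ideal0.
  by rewrite xdegD xdegU i0 addn0.
case: (xdeg_le1P y0 w1) => [ew|[k k0 ew]].
  exists (w + U_(i))%MM; last by rewrite subrr; apply: in_ideal0.
  by rewrite xdegD xdegU ew xdegUMn // add0n leq_b1.
exists (U_(y) *+ w y + (U_(y) *+ cij a k i + U_(oadd k i)))%MM.
  by rewrite !xdegD !xdegUMn // xdegU; case: (_ != _).
have -> : 'X_[w + U_(i)] - 'X_[U_(y) *+ w y + (U_(y) *+ cij a k i + U_(oadd k i))] =
   'X_[U_(y) *+ w y] * ('X_k * 'X_i - 'X_y ^+ cij a k i * 'X_(oadd k i)) :> {mpoly K[m]}.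
  by rewrite {1}ew !mpolyXD -!mpolyXn; ring.
exact/in_idealMl/binomial_mem.
Qed.

Lemma monomial_reduce u : exists2 w, (xdeg w <= 1)%N & in_ideal B ('X_[u] - 'X_[w]).
Proof.
move: {2}(mdeg u) (erefl (mdeg u)) => n; elim: n u => [|n IHn] u.
  move/eqP; rewrite mdeg_eq0 => /eqP ->; exists 0%MM; first by rewrite xdeg0.
  by rewrite subrr; apply: in_ideal0.
move=> u_deg; have [i ui] : exists i, (0 < u i)%N.
  apply/existsP; apply: contraPT u_deg => /existsPn u0.
  have -> : u = 0%MM by apply/mnmP => k; have := u0 k; rewrite lt0n negbK mnm0E => /eqP.
  by rewrite mdeg0.
set u' := (u - U_(i))%MM; have eu : u = (u' + U_(i))%MM := mnm_subUK ui.
have [w' w'1 Iw'] : exists2 w', (xdeg w' <= 1)%N & in_ideal B ('X_[u'] - 'X_[w']).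
  by apply: IHn; move: u_deg; rewrite eu mdegD mdeg1 addn1 => -[].
have [w w1 Iw] := std_mulX_reduce i w'1.
exists w => //.
have -> : 'X_[u] - 'X_[w] = 'X_i * ('X_[u'] - 'X_[w']) + ('X_[w' + U_(i)] - 'X_[w])
    :> {mpoly K[m]}.
  by rewrite eu !mpolyXD; ring.
by apply: in_idealD => //; apply: in_idealMl.
Qed.

Lemma poly_reduce (p : {mpoly K[m]}) : exists2 q : {mpoly K[m]},
  (forall v, (1 < xdeg v)%N -> q@_v = 0) & in_ideal B (p - q).
Proof.
rewrite {1}(mpolyE p); elim: (msupp p) => [|u s [q q_std Iq]].
  by exists 0 => [v _|]; rewrite ?mcoeff0 // big_nil subrr; apply: in_ideal0.
have [w w1 Iw] := monomial_reduce u.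
exists (p@_u *: 'X_[w] + q).
  move=> v v_gt1; rewrite mcoeffD mcoeffZ mcoeffX q_std //; case: eqP => [wv|_].
    by move: v_gt1; rewrite -wv ltnNge w1.
  by rewrite mulr0 addr0.
rewrite big_cons; set T := \sum_(_ <- _) _.
have -> : p@_u *: 'X_[u] + T - (p@_u *: 'X_[w] + q) =
    (p@_u)%:MP * ('X_[u] - 'X_[w]) + (T - q).
  by rewrite -!mul_mpolyC; ring.
by apply: in_idealD => //; apply: in_idealMl.
Qed.

End Reduction.

Section AperyToricIdeal.

Variables (K : fieldType) (S : pred nat) (m : nat) (a : 'I_m -> nat) (y : 'I_m).
Hypotheses (S_ns : numerical_semigroup S) (S_mult : multiplicity S m)
  (S_apery : apery_data S a) (y0 : val y = 0%N).

Local Notation B := (@apery_binomials K m a).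
Local Notation J := (@apery_toric_ideal K m a).

Lemma apery_binomials_toric g : B g -> J g.
Proof.
case=> [i [j [i_gt0 ij ->]]]; rewrite (ordmod_0 y0).
by apply: (binomial_toric S_ns) => //; rewrite -lt0n // (leq_trans i_gt0).
Qed.

Lemma toric_in_binomial_ideal p : J p -> in_ideal B p.
Proof.
move=> Jp; have [q q_std Iq] := poly_reduce a y0 p.
suff q0 : q = 0 by rewrite q0 subr0 in Iq.
apply: (toric_std_eq0 S_mult S_apery y0 q_std).
have := in_ideal_toric apery_binomials_toric Iq; rewrite /apery_toric_ideal rmorphB /= Jp.
by rewrite sub0r => /eqP; rewrite oppr_eq0 => /eqP.
Qed.

Variable le : rel 'X_{1..m}.
Hypotheses (le_refl : reflexive le) (le_anti : antisymmetric le)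
  (le_xdeg : forall u v, (xdeg v < xdeg u)%N -> le v u && (u != v)).

Lemma lead_monoms_mono (G H : {mpoly K[m]} -> Prop) g :
  (forall f, G f -> H f) -> lead_monoms le G g -> lead_monoms le H g.
Proof. by move=> GH [f [u [Gf f0 lu ->]]]; exists f, u; split=> //; apply: GH. Qed.

Lemma is_lead_monom_neq0 (p : {mpoly K[m]}) u : is_lead_monom le p u -> p != 0.
Proof. by case=> up _; apply: contraTneq up => ->; rewrite mcoeff_msupp mcoeff0 eqxx. Qed.

Lemma lead_binomial (i j o : 'I_m) c : val i != 0%N -> val j != 0%N ->
  is_lead_monom le ('X_i * 'X_j - 'X_y ^+ c * 'X_o : {mpoly K[m]}) (U_(i) + U_(j))%MM.
Proof.
move=> i0 j0; set u := (U_(i) + U_(j))%MM; set w := (U_(y) *+ c + U_(o))%MM.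
have -> : ('X_i * 'X_j - 'X_y ^+ c * 'X_o : {mpoly K[m]}) = 'X_[u] - 'X_[w].
  by rewrite !mpolyXD mpolyXn.
have wu : (xdeg w < xdeg u)%N.
  by rewrite !xdegD !xdegU xdegUMn // i0 j0 add0n ltnS leq_b1.
have uw : (w == u) = false by apply/negbTE/eqP => e; move: wu; rewrite e ltnn.
split; first by rewrite mcoeff_msupp mcoeffB !mcoeffX eqxx uw subr0 oner_neq0.
move=> v; rewrite mcoeff_msupp mcoeffB !mcoeffX.
case: (eqVneq u v) => [<- _|uv]; first exact: le_refl.
case: (eqVneq w v) => [<- _|wv]; first by case/andP: (le_xdeg wu).
by rewrite subrr eqxx.
Qed.

Lemma quad_lead_binomial g : quad_monoms g -> in_ideal (lead_monoms le B) g.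
Proof.
have lead_gen (i j : 'I_m) : (0 < i)%N -> (i <= j)%N ->
    lead_monoms le B ('X_i * 'X_j).
  move=> i_gt0 ij; have j_gt0 := leq_trans i_gt0 ij.
  have lb := lead_binomial (oadd i j) (cij a i j) (lt0n_neq0 i_gt0) (lt0n_neq0 j_gt0).
  exists ('X_i * 'X_j - 'X_y ^+ cij a i j * 'X_(oadd i j)), (U_(i) + U_(j))%MM.
  split=> //; [by exists i, j; rewrite (ordmod_0 y0) | exact: is_lead_monom_neq0 lb |].
  by rewrite mpolyXD.
case=> [i [j [i_gt0 j_gt0 ->]]]; apply: in_ideal_gen.
by case: (leqP i j) => [|/ltnW] ij; [|rewrite mulrC]; apply: lead_gen.
Qed.

(* By toric_std_eq0 a nonzero element of J has a monomial of x-degree at least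
   two, and le_xdeg makes it dominate every standard monomial. *)
Lemma lead_toric_quad g : lead_monoms le J g -> in_ideal (@quad_monoms K m) g.
Proof.
case=> [f [u [Jf f0 [uf u_max] ->]]].
have u_gt1 : (1 < xdeg u)%N.
  rewrite ltnNge; apply: contra f0 => u1; apply/eqP.
  apply: (toric_std_eq0 S_mult S_apery y0 _ Jf) => v v_gt1.
  apply/eqP; apply: contraT; rewrite -mcoeff_msupp => vf.
  have /andP[vu uv] := le_xdeg (leq_ltn_trans u1 v_gt1).
  by move: uv; rewrite (le_anti (introT andP (conj vu (u_max _ vf)))) eqxx.
have [k k0 uk] := xdeg_gt0P (ltnW u_gt1); have eu := mnm_subUK uk.
have [j j0 uj] : exists2 j : 'I_m, val j != 0%N & (0 < (u - U_(k))%MM j)%N.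
  by apply: xdeg_gt0P; move: u_gt1; rewrite {1}eu xdegD xdegU k0 addn1.
rewrite eu (mnm_subUK uj) !mpolyXD -mulrA; apply/in_idealMl/in_ideal_gen.
by exists j, k; rewrite !lt0n.
Qed.

End AperyToricIdeal.

Theorem lemma3p1 (K : fieldType) (S : pred nat) (m : nat) (a : 'I_m -> nat) :
  numerical_semigroup S -> multiplicity S m -> (2 <= m)%N ->
  apery_data S a ->
  same_ideal (in_ideal (@apery_binomials K m a)) (@apery_toric_ideal K m a) /\
  (forall le : rel 'X_{1..m},
     term_order le ->
     (forall u v : 'X_{1..m}, (xdeg v < xdeg u)%N -> le v u && (u != v)) ->
     groebner_basis le (@apery_binomials K m a) (@apery_toric_ideal K m a) /\
     same_ideal (initial_ideal le (@apery_toric_ideal K m a))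
                (in_ideal (@quad_monoms K m))).
Proof.
move=> S_ns S_mult _ S_apery; have [m_gt0 _ _] := S_mult.
pose y : 'I_m := Ordinal m_gt0; have y0 : val y = 0%N by [].
have BJ := @apery_binomials_toric K _ _ _ _ S_ns S_mult S_apery y0.
split=> [p|le [[le_refl le_anti _ _] _] le_xdeg].
  split; first exact: in_ideal_toric.
  exact: (toric_in_binomial_ideal S_ns S_mult S_apery y0).
have QB := @quad_lead_binomial K _ a _ y0 _ le_refl le_xdeg.
have JQ := @lead_toric_quad K _ _ _ _ S_mult S_apery y0 _ le_anti le_xdeg.
have BJlead g := @lead_monoms_mono K m le _ _ g BJ.
split; [split=> // p; split | split].
- by apply: in_ideal_sub => g /JQ; apply: in_ideal_sub.
- exact: in_ideal_mono.
- exact: in_ideal_sub.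
- by apply: in_ideal_sub => g /QB; apply: in_ideal_mono.
Qed.
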